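(* Let $K=2$ and let $N\ge 0$ be an integer. Then there exists a pair $(n_1^\star,n_2^\star)$ of nonnegative integers with $n_1^\star+n_2^\star=N$ which minimizes $\mathbb{E}[u(n_1,n_2)]$ over all pairs of nonnegative integers $(n_1,n_2)$ with $n_1+n_2=N$, and which satisfies $|n_1^\star-n_2^\star|\le 1$.
   Context: Fix an integer $K\ge 2$. An initial assortment is a vector $\vec n=(n_1,\dots,n_K)$ of nonnegative integers ($n_i$ is the initial stock of goodie type $i$), with $N=\sum_i n_i$ attendees. Attendees arrive one at a time: the stocks start at $\vec n^{(0)}=\vec n$; at each step $t=1,2,\dots$, as long as at least two coordinates of the current stock vector $\vec n^{(t-1)}$ are nonzero, attendee $t$ chooses an index $i$ uniformly at random (independently of the past) among the indices with $n_i^{(t-1)}>0$, and $\vec n^{(t)}=\vec n^{(t-1)}-\vec e_i$, where $\vec e_i$ is the $i$-th standard unit vector. Let $T$ be the first time at which at most one coordinate of $\vec n^{(T)}$ is nonzero. The remaining attendees, who have only one type available, are called unhappy; their number is the random variable $u(\vec n)=N-T$. *)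

From mathcomp Require Import all_boot all_order all_algebra.
Set Implicit Arguments. Unset Strict Implicit. Unset Printing Implicit Defensive.
Import Order.TTheory GRing.Theory Num.Theory.
Local Open Scope ring_scope.

Section Goodies.
Variable K : nat.
Definition stock := {ffun 'I_K -> nat}.

Definition nnz (n : stock) : nat := #|[set i | (0 < n i)%N]|.

Definition active (n : stock) : bool := (1 < nnz n)%N.

Definition take1 (n : stock) (i : 'I_K) : stock :=
  [ffun j => (n j - (j == i))%N].

(* s is a complete trajectory (sequence of chosen types, stopping exactly at
   time T = size s) of the process started from n *)
Fixpoint valid_traj (n : stock) (s : seq 'I_K) : bool :=
  match s with
  | [::] => ~~ active n
  | i :: s' => [&& active n, (0 < n i)%N & valid_traj (take1 n i) s']
  end.

Fixpoint traj_prob (n : stock) (s : seq 'I_K) : rat :=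
  match s with
  | [::] => 1
  | i :: s' => (nnz n)%:R^-1 * traj_prob (take1 n i) s'
  end.

Definition total (n : stock) : nat := (\sum_i n i)%N.

(* E[u(n)] = sum over all complete trajectories (of length T <= N) of
   probability times number of unhappy attendees N - T. *)
Definition expected_unhappy (n : stock) : rat :=
  \sum_(k < (total n).+1)
     \sum_(t : k.-tuple 'I_K | valid_traj n t)
        traj_prob n t * (total n - k)%:R.
End Goodies.

Definition stock2 (n1 n2 : nat) : stock 2 :=
  [ffun i : 'I_2 => if val i == 0%N then n1 else n2].

Definition Eu2 (n1 n2 : nat) : rat := expected_unhappy (stock2 n1 n2).

From Pilot Require Import Defs.
From mathcomp Require Import all_boot all_order all_algebra.
From mathcomp Require Import zify lra.
Set Implicit Arguments. Unset Strict Implicit. Unset Printing Implicit Defensive.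
Import Order.TTheory GRing.Theory Num.Theory.
Local Open Scope ring_scope.

(* First-step analysis gives E(a+1, b+1) = (E(a, b+1) + E(a+1, b)) / 2 with
   E(0, b) = b, so E is symmetric and E(a, b) <= a + b.  From this recurrence,
   an induction shows that moving one goodie from the larger stock to the
   smaller one never increases E; iterating such moves turns any split of N
   into the balanced split (N/2, N - N/2). *)

Lemma big_tuple_cons (R : nmodType) (I : finType) k (F : k.+1.-tuple I -> R) :
  \sum_(t : k.+1.-tuple I) F t =
  \sum_(i : I) \sum_(t : k.-tuple I) F [tuple of i :: t].
Proof.
rewrite pair_big (reindex (fun p : I * k.-tuple I => [tuple of p.1 :: p.2])) //=.
exists (fun t : k.+1.-tuple I => (thead t, [tuple of behead t])).
  by move=> [i t] _ /=; congr pair; apply/val_inj.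
by move=> [[|x s] //= ?] _; apply/val_inj.
Qed.

(* Plain [total] would resolve to ssrbool's totality of relations. *)
Local Notation total := Defs.total.

Section FirstStep.
Variable K : nat.
Implicit Types n : stock K.

Definition unhappy_by_length n k : rat :=
  \sum_(t : k.-tuple 'I_K | valid_traj n t) traj_prob n t * (total n - k)%:R.

Lemma expected_unhappyE n :
  expected_unhappy n = \sum_(k < (total n).+1) unhappy_by_length n k.
Proof. by []. Qed.

Lemma unhappy_by_length0 n :
  unhappy_by_length n 0 = if active n then 0 else (total n)%:R.
Proof.
rewrite /unhappy_by_length big_mkcond /= (big_pred1 [tuple]) /=.
  by case: (active n); rewrite /= ?mul1r ?subn0.
by move=> t; apply/esym/eqP; rewrite [t]tuple0.
Qed.

Lemma total_take1 n i : (0 < n i)%N -> total (take1 n i) = (total n).-1.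
Proof.
move=> ni; rewrite /total (bigD1 i) //= [in RHS](bigD1 i) //= ffunE eqxx.
rewrite (eq_bigr n) => [|j /negbTE ji]; last by rewrite ffunE ji subn0.
set s := (\sum_(j | _) _)%N; change (n i - 1 + s = (n i + s).-1)%N; lia.
Qed.

Lemma unhappy_by_lengthS n k :
  unhappy_by_length n k.+1 =
  if active n then
    \sum_(i | (0 < n i)%N) (nnz n)%:R^-1 * unhappy_by_length (take1 n i) k
  else 0.
Proof.
rewrite /unhappy_by_length big_mkcond big_tuple_cons /=.
case: (active n) => /=; last by rewrite big1 // => i _; rewrite big1.
rewrite [RHS]big_mkcond; apply: eq_bigr => i _.
case: (ltnP 0 (n i)) => ni /=; last by rewrite big1.
rewrite mulr_sumr [RHS]big_mkcond; apply: eq_bigr => t _.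
case: (valid_traj _ _) => //; rewrite total_take1 // mulrA; congr (_ * _%:R).
lia.
Qed.

Lemma total_gt0_active n : active n -> (0 < total n)%N.
Proof.
apply: contraTT; rewrite lt0n negbK /total sum_nat_eq0 => /forallP n0.
rewrite /active /nnz (_ : [set i | _] = set0) ?cards0 //.
by apply/setP => i; rewrite !inE (eqP (n0 i)).
Qed.

Lemma expected_unhappy_inactive n :
  ~~ active n -> expected_unhappy n = (total n)%:R.
Proof.
move=> /negbTE inact; rewrite expected_unhappyE big_ord_recl.
rewrite unhappy_by_length0 inact big1 ?addr0 // => k _.
by rewrite unhappy_by_lengthS inact.
Qed.

Lemma expected_unhappy_active n : active n ->
  expected_unhappy n =
  \sum_(i | (0 < n i)%N) (nnz n)%:R^-1 * expected_unhappy (take1 n i).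
Proof.
move=> act; rewrite expected_unhappyE.
have := total_gt0_active act; case Tn: (total n) => [//|T] _.
rewrite big_ord_recl unhappy_by_length0 act add0r.
under eq_bigr do rewrite unhappy_by_lengthS act.
rewrite exchange_big; apply: eq_bigr => i ni.
by rewrite expected_unhappyE -mulr_sumr total_take1 // Tn.
Qed.

End FirstStep.

Lemma total_stock2 a b : total (stock2 a b) = (a + b)%N.
Proof. by rewrite /total !big_ord_recl big_ord0 /= !ffunE /= addn0. Qed.

Lemma nnz_stock2 a b : nnz (stock2 a b) = ((0 < a)%N + (0 < b)%N)%N.
Proof.
rewrite /nnz -sum1_card big_mkcond !big_ord_recl big_ord0 /= !inE !ffunE /=.
by case: (0 < a)%N; case: (0 < b)%N.
Qed.

Lemma take1_stock2 a b (i : 'I_2) : take1 (stock2 a b) i =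
  if val i == 0%N then stock2 a.-1 b else stock2 a b.-1.
Proof.
apply/ffunP => j; rewrite !ffunE.
by case: i => [[|[|//]] ?]; case: j => [[|[|//]] ?]; rewrite /= ffunE /= ?subn0 ?subn1.
Qed.

Lemma Eu2_0l b : Eu2 0 b = b%:R.
Proof.
by rewrite /Eu2 expected_unhappy_inactive ?total_stock2 // /active nnz_stock2; case: b.
Qed.

Lemma Eu2_0r a : Eu2 a 0 = a%:R.
Proof.
rewrite /Eu2 expected_unhappy_inactive ?total_stock2 ?addn0 // /active nnz_stock2.
by case: a.
Qed.

Lemma Eu2_SS a b : Eu2 a.+1 b.+1 = (Eu2 a b.+1 + Eu2 a.+1 b) / 2.
Proof.
rewrite /Eu2 expected_unhappy_active; last by rewrite /active nnz_stock2.
rewrite big_mkcond !big_ord_recl big_ord0 /= !ffunE /= nnz_stock2 !take1_stock2 /=.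
by rewrite addr0 mulrDl !(mulrC 2^-1).
Qed.

Lemma Eu2C a b : Eu2 a b = Eu2 b a.
Proof.
elim: a b => [|a IHa] b; first by case: b => [|b]; rewrite ?Eu2_0l ?Eu2_0r.
elim: b => [|b IHb]; first by rewrite Eu2_0l Eu2_0r.
by rewrite !Eu2_SS IHa IHb addrC.
Qed.

Lemma Eu2_le_sum a b : Eu2 a b <= (a + b)%:R.
Proof.
elim: a b => [|a IHa] b; first by rewrite Eu2_0l.
elim: b => [|b IHb]; first by rewrite Eu2_0r addn0.
rewrite Eu2_SS; have := IHa b.+1; have := IHb.
rewrite !addnS !addSn -(natr1 (a + b).+1) -!(natr1 (a + b)); lra.
Qed.

Lemma Eu2_shift_le x w : (x <= w)%N -> Eu2 x.+1 w.+1 <= Eu2 x w.+2.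
Proof.
elim: x w => [|x IHx] w le_xw.
  rewrite Eu2_SS !Eu2_0l; have := Eu2_le_sum 1 w.
  rewrite add1n -(natr1 w.+1) -!(natr1 w); lra.
elim: w le_xw => [//|w IHw] le_xw.
rewrite (Eu2_SS x.+1 w.+1) (Eu2_SS x w.+2).
have left_le := IHx w.+1 (ltnW le_xw).
have right_le : Eu2 x.+2 w.+1 <= Eu2 x.+1 w.+2.
  have [lt_xw|] := ltnP x w; first exact: IHw.
  by rewrite -ltnS => /(conj le_xw)/andP/anti_leq ->; rewrite Eu2C.
lra.
Qed.

Lemma Eu2_balance_le k r m : Eu2 (m + k) (m + k + r) <= Eu2 m (m + k.*2 + r).
Proof.
elim: k m => [|k IHk] m; first by rewrite addn0.
have := IHk m.+1; rewrite doubleS !addnS !addSn => IHk_shifted.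
by apply: le_trans IHk_shifted (Eu2_shift_le _); rewrite -addnA leq_addr.
Qed.

Lemma Eu2_halves_le m1 m2 :
  Eu2 (m1 + m2)./2 (m1 + m2 - (m1 + m2)./2) <= Eu2 m1 m2.
Proof.
wlog le_m12 : m1 m2 / (m1 <= m2)%N.
  move=> Hwlog; have [|/ltnW le_m21] := leqP m1 m2; first exact: Hwlog.
  by rewrite [Eu2 m1 m2]Eu2C addnC; apply: Hwlog.
rewrite -(subnKC le_m12) -(odd_double_half (m2 - m1)).
move: (odd _) ((m2 - m1)./2) => r k; rewrite [(r + _)%N]addnC (addnA m1 k.*2 r).
have half_eq : ((m1 + (m1 + k.*2 + r))./2 = m1 + k)%N.
  by rewrite -divn2 -muln2; case: r; lia.
rewrite half_eq (_ : m1 + (m1 + k.*2 + r) - (m1 + k) = m1 + k + r)%N.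
  exact: Eu2_balance_le.
by rewrite -muln2; lia.
Qed.

Theorem theorem1 (N : nat) :
  exists n1 n2 : nat,
    [/\ (n1 + n2)%N = N,
        (forall m1 m2 : nat, (m1 + m2)%N = N -> Eu2 n1 n2 <= Eu2 m1 m2)
      & (n1 <= n2 + 1)%N /\ (n2 <= n1 + 1)%N].
Proof.
exists N./2, (N - N./2)%N; split.
- by rewrite -divn2; lia.
- by move=> m1 m2 <-; apply: Eu2_halves_le.
- by rewrite -divn2; lia.
Qed.
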